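(* Let $A,B,C\in\operatorname{Sym}(n,\mathbb{R})$, where $A,B$ are linearly independent, form a non-dissipative pair, and satisfy $\operatorname{maxrank}\{A,B\}\ge17$, and where $Q_C$ vanishes on $\{Q_A=0\}\cap\{Q_B=0\}$. Assume that at least one connected component of $\mathcal{N}$ spans $\mathbb{R}^n$. Then $C$ is a linear combination of $A$ and $B$.
   Context: $Q_M(z)={}^tzMz$. Non-dissipative pair: $0$ is the only positive semidefinite element of $\operatorname{span}_{\mathbb{R}}\{A,B\}$; $\operatorname{maxrank}\{A,B\}$ is the maximal rank of elements of this span. $\mathcal{N}:=\{z\in\mathbb{R}^n:Q_A(z)=Q_B(z)=0,\ Az\text{ and }Bz\text{ linearly independent}\}$; a connected component spans $\mathbb{R}^n$ if its linear span is $\mathbb{R}^n$. No symplectic structure is assumed. *)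

From HB Require Import structures.
From mathcomp Require Import all_boot all_order all_algebra.
From mathcomp Require Import all_classical all_reals all_analysis.
Set Implicit Arguments. Unset Strict Implicit. Unset Printing Implicit Defensive.
Import Order.TTheory GRing.Theory Num.Theory.
Import numFieldNormedType.Exports.
Local Open Scope classical_set_scope.
Local Open Scope ring_scope.

Definition symmetric_mx (R : realType) (n : nat) (A : 'M[R]_n) : Prop := A^T = A.

Definition Q (R : realType) (n : nat) (M : 'M[R]_n) (z : 'cV[R]_n) : R :=
  (z^T *m M *m z) 0 0.

Definition psd_mx (R : realType) (n : nat) (M : 'M[R]_n) : Prop :=
  forall z : 'cV[R]_n, 0 <= Q M z.

Definition lin_indep2 (R : realType) (V : lmodType R) (u v : V) : Prop :=
  forall a b : R, a *: u + b *: v = 0 -> a = 0 /\ b = 0.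

Definition non_dissipative (R : realType) (n : nat) (A B : 'M[R]_n) : Prop :=
  forall a b : R, psd_mx (a *: A + b *: B) -> a *: A + b *: B = 0.

Definition maxrank_ge (R : realType) (n : nat) (A B : 'M[R]_n) (k : nat) : Prop :=
  exists a b : R, (k <= \rank (a *: A + b *: B))%N.

Definition Nset (R : realType) (n : nat) (A B : 'M[R]_n) : set 'cV[R]_n :=
  [set z | Q A z = 0 /\ Q B z = 0 /\ lin_indep2 (A *m z) (B *m z)].

Definition spans_all (R : realType) (n : nat) (S : set 'cV[R]_n) : Prop :=
  forall v : 'cV[R]_n, exists (m : nat) (c : 'I_m -> R) (w : 'I_m -> 'cV[R]_n),
    (forall i, S (w i)) /\ v = \sum_(i < m) c i *: w i.

From HB Require Import structures.
From mathcomp Require Import all_boot all_order all_algebra.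
From mathcomp Require Import all_classical all_reals all_analysis.
From mathcomp Require Import polyrcf ring lra zify.
Import Order.TTheory GRing.Theory Num.Theory.
Import numFieldNormedType.Exports.
Local Open Scope classical_set_scope.
Local Open Scope ring_scope.
Set Implicit Arguments. Unset Strict Implicit. Unset Printing Implicit Defensive.

(* Fix z in N and let T be the common kernel of the linear forms <Az,.> and
   <Bz,.>, and p, q the dual vectors (<Az,p> = <Bz,q> = 1, <Az,q> = <Bz,p> = 0).
   For v in T with Q_A(v) <> 0 and small m > 0, a root l of a cubic makes
   w = v + m (p + l q) satisfy <Az,w> Q_B(w) = <Bz,w> Q_A(w); then the
   line through z in direction w meets {Q_A = Q_B = 0} a second time, which
   pins Q_C(w) down.  Letting m -> 0 gives Cz = a Az + b Bz and Q_G = 0 on T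
   for G = C - aA - bB, so rank G <= 4 (if Q_A and Q_B both vanish on T, then
   rank A, rank B <= 4 instead, against maxrank).
   Along a component K of N, two such deviations G_x, G_z differ by an element
   of the pencil of rank <= 8; as maxrank >= 17, all coefficient pairs lie on
   one line through (a_x, b_x).  Hence D = G_x satisfies Dz = t(z) Ez on K for a
   fixed E in the pencil; since K spans, D = XE and every t(z) is an eigenvalue
   of X.  K is then covered by the disjoint closed sets ker D and ker (D - sE),
   s a nonzero eigenvalue, so by connectedness D vanishes on K, hence D = 0. *)

Section BilinearForm.
Variables (R : comNzRingType) (n : nat).
Implicit Types (M N : 'M[R]_n) (u v w : 'cV[R]_n).

Definition bform M u w : R := (u^T *m M *m w) 0 0.

Lemma bformDl M u v w : bform M (u + v) w = bform M u w + bform M v w.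
Proof. by rewrite /bform linearD !mulmxDl mxE. Qed.
Lemma bformDr M u v w : bform M u (v + w) = bform M u v + bform M u w.
Proof. by rewrite /bform mulmxDr mxE. Qed.
Lemma bformZl M c u w : bform M (c *: u) w = c * bform M u w.
Proof. by rewrite /bform linearZ -!scalemxAl mxE. Qed.
Lemma bformZr M c u w : bform M u (c *: w) = c * bform M u w.
Proof. by rewrite /bform -scalemxAr mxE. Qed.
Lemma bformNl M u w : bform M (- u) w = - bform M u w.
Proof. by rewrite -scaleN1r bformZl mulN1r. Qed.
Lemma bformNr M u w : bform M u (- w) = - bform M u w.
Proof. by rewrite -scaleN1r bformZr mulN1r. Qed.
Lemma bformBl M u v w : bform M (u - v) w = bform M u w - bform M v w.
Proof. by rewrite bformDl bformNl. Qed.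
Lemma bformBr M u v w : bform M u (v - w) = bform M u v - bform M u w.
Proof. by rewrite bformDr bformNr. Qed.
Lemma bformDm M N u w : bform (M + N) u w = bform M u w + bform N u w.
Proof. by rewrite /bform mulmxDr mulmxDl mxE. Qed.
Lemma bformZm M c u w : bform (c *: M) u w = c * bform M u w.
Proof. by rewrite /bform -scalemxAr -scalemxAl mxE. Qed.
Lemma bformBm M N u w : bform (M - N) u w = bform M u w - bform N u w.
Proof. by rewrite bformDm -scaleN1r bformZm mulN1r. Qed.

Lemma bformC M u w : M^T = M -> bform M u w = bform M w u.
Proof.
move=> sM; rewrite /bform.
transitivity ((u^T *m M *m w)^T 0 0); first by rewrite [RHS]mxE.
by rewrite !trmx_mul trmxK sM mulmxA.
Qed.

Lemma bform_trmx M u w : M^T = M -> bform M u w = bform 1%:M (M *m u) w.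
Proof. by move=> sM; rewrite /bform trmx_mul sM mulmx1. Qed.

Lemma bform_comb M a b u w : M^T = M ->
  bform M (a *: u + b *: w) (a *: u + b *: w) =
  a ^+ 2 * bform M u u + 2 * a * b * bform M u w + b ^+ 2 * bform M w w.
Proof.
by move=> sM; rewrite !(bformDl, bformDr, bformZl, bformZr) (bformC u w sM); ring.
Qed.

Lemma bform_addZ M u w c : M^T = M ->
  bform M (u + c *: w) (u + c *: w) =
  bform M u u + 2 * c * bform M u w + c ^+ 2 * bform M w w.
Proof.
by move=> sM; rewrite !(bformDl, bformDr, bformZl, bformZr) (bformC w u sM); ring.
Qed.

End BilinearForm.

Section NormBounds.
Variable R : numDomainType.
Implicit Types a b c d : R.

Lemma norm_leD a b c d : `|a| <= c -> `|b| <= d -> `|a + b| <= c + d.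
Proof. by move=> ha hb; apply: le_trans (ler_normD _ _) (lerD ha hb). Qed.
Lemma norm_leB a b c d : `|a| <= c -> `|b| <= d -> `|a - b| <= c + d.
Proof. by move=> ha hb; apply: norm_leD; rewrite ?normrN. Qed.
Lemma norm_leM a b c d : `|a| <= c -> `|b| <= d -> `|a * b| <= c * d.
Proof. by move=> ha hb; rewrite normrM ler_pM. Qed.
Lemma norm_leX2 a c : `|a| <= c -> `|a ^+ 2| <= c ^+ 2.
Proof. by move=> ha; rewrite !expr2; apply: norm_leM. Qed.
Lemma norm_le1 : `|1 : R| <= 1.
Proof. by rewrite normr1. Qed.
Lemma norm_le_natr k : `|k%:R : R| <= k%:R.
Proof. by rewrite normr_nat. Qed.

End NormBounds.

Ltac norm_bound := repeat first
  [ assumption | apply: lexx | apply: norm_le1 | apply: norm_le_natr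
  | apply: norm_leB | apply: norm_leD | apply: norm_leM | apply: norm_leX2 ].

Lemma small_bound_eq0 (R : realFieldType) (c k m0 : R) : 0 < m0 ->
  (forall m, 0 < m -> m <= m0 -> `|c| <= m * k) -> c = 0.
Proof.
move=> m0_gt0 hc; apply/eqP; rewrite -normr_le0.
apply/ler_addgt0Pr => e e_gt0; rewrite add0r.
have k_ge0 : 0 <= k by rewrite -(pmulr_rge0 _ m0_gt0); apply: le_trans (hc _ m0_gt0 _).
pose m := Num.min m0 (e / (k + 1)).
have m_gt0 : 0 < m by rewrite lt_min m0_gt0 divr_gt0 // ltr_wpDl.
apply: le_trans (hc m m_gt0 _) _; first by rewrite ge_min lexx.
have : m <= e / (k + 1) by rewrite ge_min lexx orbT.
rewrite ler_pdivlMr ?ltr_wpDl // => hm; nra.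
Qed.

Section Cone.
Variables (R : rcfType) (n : nat) (A B C : 'M[R]_n).
Hypotheses (symA : A^T = A) (symB : B^T = B) (symC : C^T = C).
Hypothesis QC_cone :
  forall y, bform A y y = 0 -> bform B y y = 0 -> bform C y y = 0.
Variable z : 'cV[R]_n.
Hypotheses (zA : bform A z z = 0) (zB : bform B z z = 0).

(* The line through z in direction w meets the cone {Q_A = 0} again at
   y = Q_A(w) z - 2 A(z,w) w; the hypothesis on w puts y on {Q_B = 0} too. *)
Lemma cone_line_transfer w :
  bform A z w * bform B w w = bform B z w * bform A w w -> bform A z w != 0 ->
  bform A z w * bform C w w = bform C z w * bform A w w.
Proof.
move=> hw Azw_neq0.
pose y := bform A w w *: z + (- (2 * bform A z w)) *: w.
have zC : bform C z z = 0 by apply: QC_cone.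
have yA : bform A y y = 0 by rewrite bform_comb // zA; ring.
have yB : bform B y y = 0.
  rewrite bform_comb // zB.
  transitivity (4 * bform A z w *
    (bform A z w * bform B w w - bform B z w * bform A w w)); first by ring.
  by rewrite hw subrr mulr0.
have : 4 * bform A z w * (bform A z w * bform C w w - bform C z w * bform A w w) = 0.
  by rewrite -(QC_cone yA yB) bform_comb // zC; ring.
move/eqP; rewrite !mulf_eq0 (negbTE Azw_neq0) orbF pnatr_eq0 /= subr_eq0.
by move/eqP.
Qed.

Variables p q : 'cV[R]_n.
Hypotheses (pA : bform A z p = 1) (pB : bform B z p = 0).
Hypotheses (qA : bform A z q = 0) (qB : bform B z q = 1).

Section Tangent.
Variable v : 'cV[R]_n.
Hypotheses (vA : bform A z v = 0) (vB : bform B z v = 0).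

Definition slope X (m l : R) :=
  2 * (bform X v p + l * bform X v q) +
  m * (bform X p p + 2 * l * bform X p q + l ^+ 2 * bform X q q).

Definition slope_bound X (L : R) :=
  2 * (`|bform X v p| + L * `|bform X v q|) +
  (`|bform X p p| + 2 * L * `|bform X p q| + L ^+ 2 * `|bform X q q|).

Lemma bform_curve X m l : X^T = X ->
  bform X (v + m *: (p + l *: q)) (v + m *: (p + l *: q)) =
  bform X v v + m * slope X m l.
Proof.
move=> sX; rewrite !(bformDl, bformDr, bformZl, bformZr).
by rewrite (bformC p v sX) (bformC q v sX) (bformC q p sX) /slope; ring.
Qed.

Lemma bform_z_curve X m l :
  bform X z (v + m *: (p + l *: q)) =
  bform X z v + m * (bform X z p + l * bform X z q).
Proof. by rewrite !(bformDr, bformZr). Qed.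

Lemma norm_slope_le X m l L :
  `|l| <= L -> `|m| <= 1 -> `|slope X m l| <= slope_bound X L.
Proof.
move=> hl hm; rewrite /slope /slope_bound -[X in _ <= _ + X]mul1r.
by norm_bound.
Qed.

Lemma slope_bound_ge0 X L : 0 <= L -> 0 <= slope_bound X L.
Proof. by move=> L0; rewrite /slope_bound !(addr_ge0, mulr_ge0, exprn_ge0). Qed.

Hypothesis vA_neq0 : bform A v v != 0.
Let a0 := bform A v v.
Let b0 := bform B v v.
Let l0 := b0 / a0.

Lemma exists_cone_param m :
  (forall l, `|l - l0| <= 1 -> `|m * (slope B m l - l * slope A m l)| < `|a0|) ->
  exists l, `|l - l0| <= 1 /\ b0 + m * slope B m l = l * (a0 + m * slope A m l).
Proof.
move=> small.
pose slope_poly X : {poly R} :=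
  (2 * bform X v p + m * bform X p p)%:P +
  (2 * bform X v q + m * (2 * bform X p q))%:P * 'X + (m * bform X q q)%:P * 'X^2.
have slope_polyE X l : (slope_poly X).[l] = slope X m l.
  by rewrite /slope_poly !(hornerD, hornerM, hornerC, hornerX, hornerXn) /slope; ring.
clearbody slope_poly.
pose P := b0%:P + m%:P * slope_poly B - 'X * (a0%:P + m%:P * slope_poly A).
have PE l : P.[l] = b0 - l * a0 + m * (slope B m l - l * slope A m l).
  by rewrite /P !(hornerD, hornerM, hornerN, hornerC, hornerX) !slope_polyE; ring.
have l0a0 : l0 * a0 = b0 by rewrite /l0 mulfVK.
have bound1 : `|l0 - 1 - l0| <= 1 by rewrite addrAC subrr add0r normrN normr1.
have bound2 : `|l0 + 1 - l0| <= 1 by rewrite addrAC subrr add0r normr1.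
(* P (l0 - 1) and P (l0 + 1) are a0 and - a0 up to the small perturbation. *)
have [l] : {l | l \in `[l0 - 1, l0 + 1] & root P l}.
  apply: polyrcf.poly_ivt; first by rewrite lerD2l -subr_ge0 opprK addrC.
  have := small _ bound1; have := small _ bound2.
  rewrite !PE.
  by case: (lerP 0 a0) => [/ger0_norm|/ltr0_norm] ->; rewrite !ltr_norml; nra.
rewrite in_itv /= => /andP[l_ge l_le] /rootP.
rewrite PE => P0; exists l; split; first by rewrite ler_norml; lra.
by apply/eqP; rewrite -subr_eq0 -P0; apply/eqP; ring.
Qed.

Let L := `|l0| + 1.

Lemma cone_curve_exists : exists2 m0 : R, 0 < m0 & forall m : R, 0 < m -> m <= m0 ->
  exists l : R, [/\ `|l| <= L, `|m| <= 1,
    b0 + m * slope B m l = l * (a0 + m * slope A m l) &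
    m * (bform C v v + m * slope C m l) =
      (bform C z v + m * (bform C z p + l * bform C z q)) * (a0 + m * slope A m l)].
Proof.
pose K := slope_bound B L + L * slope_bound A L.
have L_ge0 : 0 <= L by rewrite addr_ge0.
have K_ge0 : 0 <= K by rewrite addr_ge0 ?mulr_ge0 ?slope_bound_ge0.
have a0_gt0 : 0 < `|a0| by rewrite normr_gt0.
exists (Num.min 1 (`|a0| / (K + 1))); first by rewrite lt_min ltr01 divr_gt0 ?ltr_wpDl.
move=> m m_gt0; rewrite le_min => /andP[m_le1 m_small].
have m_norm : `|m| <= 1 by rewrite (ger0_norm (ltW m_gt0)).
have mK : m * K < `|a0|.
  move: m_small; rewrite ler_pdivlMr ?ltr_wpDl // => h.
  by apply: lt_le_trans h; rewrite ltr_pM2l // ltrDl ltr01.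
have [l [l_near eqB]] : exists l, `|l - l0| <= 1 /\
    b0 + m * slope B m l = l * (a0 + m * slope A m l).
  apply: exists_cone_param => l l_near.
  have l_le : `|l| <= L by rewrite /L -(subrK l0 l) addrC; norm_bound.
  suff : `|m * (slope B m l - l * slope A m l)| <= m * K by move/le_lt_trans; apply.
  rewrite normrM (ger0_norm (ltW m_gt0)) ler_pM2l //.
  by apply: norm_leB; rewrite ?normrM; [|apply: ler_pM]; rewrite ?norm_slope_le.
have l_le : `|l| <= L by rewrite /L -(subrK l0 l) addrC; norm_bound.
exists l; split => //.
pose w := v + m *: (p + l *: q).
have wA : bform A z w = m by rewrite bform_z_curve pA qA vA; ring.
have wB : bform B z w = m * l by rewrite bform_z_curve pB qB vB; ring.
have := @cone_line_transfer w.
rewrite wA wB !bform_curve // bform_z_curve => -> //; last by rewrite gt_eqF.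
by rewrite -mulrA eqB.
Qed.

Lemma cone_tangent_orth : bform C z v = 0.
Proof.
have [m0 m0_gt0 curve] := cone_curve_exists.
set MA := slope_bound A L; set MC := slope_bound C L.
suff : bform C z v * a0 = 0.
  by move/eqP; rewrite mulf_eq0 (negbTE vA_neq0) orbF => /eqP.
apply: (@small_bound_eq0 _ _ ((`|bform C v v| + 1 * MC) +
  (`|bform C z p| + L * `|bform C z q|) * (`|a0| + 1 * MA) +
  `|bform C z v| * MA) _ m0_gt0).
move=> m m_gt0 m_le; have [l [l_le m_norm _ eqC]] := curve m m_gt0 m_le.
have SA_le := norm_slope_le A l_le m_norm; have SC_le := norm_slope_le C l_le m_norm.
have -> : bform C z v * a0 = m * (bform C v v + m * slope C m l
    - (bform C z p + l * bform C z q) * (a0 + m * slope A m l)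
    - bform C z v * slope A m l).
  by rewrite !mulrBr eqC; ring.
by rewrite normrM (ger0_norm (ltW m_gt0)) ler_pM2l //; norm_bound.
Qed.

Lemma cone_tangent_quad : bform C v v = bform C z p * a0 + bform C z q * b0.
Proof.
have [m0 m0_gt0 curve] := cone_curve_exists.
set MA := slope_bound A L; set MB := slope_bound B L; set MC := slope_bound C L.
apply/eqP; rewrite -subr_eq0 opprD addrA; apply/eqP.
apply: (@small_bound_eq0 _ _
  (`|bform C z p| * MA + `|bform C z q| * MB + MC) _ m0_gt0).
move=> m m_gt0 m_le; have [l [l_le m_norm eqB eqC]] := curve m m_gt0 m_le.
have SA_le := norm_slope_le A l_le m_norm; have SB_le := norm_slope_le B l_le m_norm.
have SC_le := norm_slope_le C l_le m_norm.
have eqC' : bform C v v + m * slope C m l =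
    (bform C z p + l * bform C z q) * (a0 + m * slope A m l).
  apply: (mulfI (lt0r_neq0 m_gt0)).
  by rewrite eqC cone_tangent_orth; ring.
have -> : bform C v v - bform C z p * a0 - bform C z q * b0 =
    m * (bform C z p * slope A m l + bform C z q * slope B m l - slope C m l).
  apply/eqP; rewrite -subr_eq0; apply/eqP.
  transitivity (bform C v v + m * slope C m l
      - (bform C z p + l * bform C z q) * (a0 + m * slope A m l)
      - bform C z q * (b0 + m * slope B m l - l * (a0 + m * slope A m l))).
    by ring.
  by rewrite eqC' eqB !subrr mulr0 subrr.
by rewrite normrM (ger0_norm (ltW m_gt0)) ler_pM2l //; norm_bound.
Qed.
End Tangent.

Lemma cone_tangent_all v1 :
  bform A z v1 = 0 -> bform B z v1 = 0 -> bform A v1 v1 != 0 ->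
  forall v, bform A z v = 0 -> bform B z v = 0 ->
  bform C z v = 0 /\ bform (C - bform C z p *: A - bform C z q *: B) v v = 0.
Proof.
move=> v1A v1B v1A_neq0.
set G := C - bform C z p *: A - bform C z q *: B.
have symG : G^T = G by rewrite /G !linearB !linearZ /= symA symB symC.
have good w : bform A z w = 0 -> bform B z w = 0 -> bform A w w != 0 ->
    bform C z w = 0 /\ bform G w w = 0.
  move=> wA wB wA_neq0; split; first exact: cone_tangent_orth.
  by rewrite /G !(bformBm, bformZm) cone_tangent_quad //; ring.
move=> v vA vB; have [vv|] := eqVneq (bform A v v) 0; last exact: good.
have [Cv1 Gv1] := good v1 v1A v1B v1A_neq0.
pose s0 := `|2 * bform A v v1 / bform A v1 v1|.
(* v + s v1 is still tangent, and it leaves the cone {Q_A = 0} once s > s0 *)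
have shifted s : s0 < s ->
    bform C z v + s * bform C z v1 = 0 /\
    bform G v v + 2 * s * bform G v v1 + s ^+ 2 * bform G v1 v1 = 0.
  move=> s_gt; have s_gt0 : 0 < s := le_lt_trans (normr_ge0 _) s_gt.
  rewrite -bformZr -bformDr -bform_addZ //; apply: good.
  - by rewrite bformDr bformZr vA v1A; ring.
  - by rewrite bformDr bformZr vB v1B; ring.
  set x := 2 * bform A v v1 / bform A v1 v1.
  have x_le : - x <= s0 by rewrite /s0 -normrN ler_norm.
  rewrite bform_addZ // vv add0r.
  have -> : 2 * s * bform A v v1 + s ^+ 2 * bform A v1 v1 =
      s * bform A v1 v1 * (s + x) by rewrite /x; field.
  by rewrite !mulf_neq0 // gt_eqF //; lra.
have [|Cv G1] := shifted (s0 + 1); first by rewrite ltrDl.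
have [|_ G2] := shifted (s0 + 2); first by rewrite ltrDl.
move: Cv G1 G2; rewrite Cv1 Gv1 !mulr0 !addr0 => Cv G1 G2; split => //.
have : 2 * bform G v v1 = 0.
  transitivity ((bform G v v + 2 * (s0 + 2) * bform G v v1)
    - (bform G v v + 2 * (s0 + 1) * bform G v v1)); first by ring.
  by rewrite G1 G2 subrr.
by move/eqP; rewrite mulf_eq0 pnatr_eq0 /= => /eqP Gvv1; rewrite -G1 Gvv1; ring.
Qed.

End Cone.

Lemma bform_row_col (R : comNzRingType) n (M P : 'M[R]_n) i j :
  (P *m M *m P^T) i j = bform M (row i P)^T (row j P)^T.
Proof.
rewrite /bform trmxK tr_row -row_mul -row_mul colE mulmxA -colE.
by rewrite !mxE.
Qed.

Lemma mxrank_form_vanish (R : numFieldType) n k (M : 'M[R]_n) (L : 'M[R]_(n, k)) :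
  M^T = M -> (forall v, v^T *m L = 0 -> bform M v v = 0) -> (\rank M <= 2 * k)%N.
Proof.
move=> sM vanish.
have polar v w : v^T *m L = 0 -> w^T *m L = 0 -> bform M v w = 0.
  move=> vL wL; have := vanish (v + w); rewrite linearD mulmxDl vL wL addr0.
  rewrite !(bformDl, bformDr) (vanish v vL) (vanish w wL) (bformC w v sM).
  by move=> /(_ erefl)/eqP; rewrite add0r addr0 -mulr2n mulrn_eq0 /= => /eqP.
pose P := kermx L.
have rowP i : ((row i P)^T)^T *m L = 0 by rewrite trmxK -row_mul mulmx_ker row0.
have PMP : P *m M *m P^T = 0.
  by apply/matrixP => i j; rewrite bform_row_col mxE polar.
have : (P *m M <= kermx P^T)%MS by apply/sub_kermxP.
move/mxrankS => rkPM.
have := mxrank_mul_min P M.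
move: rkPM; rewrite mxrank_ker mxrank_tr mxrank_ker.
have := rank_leq_col L; have := rank_leq_row L.
lia.
Qed.

Section EuclideanForm.
Variables (R : realFieldType) (n : nat).
Implicit Types u w : 'cV[R]_n.

Lemma bform1_eq0 u : bform 1%:M u u = 0 -> u = 0.
Proof.
rewrite /bform mulmx1 mxE => /eqP; rewrite psumr_eq0 => [/allP u0|i _]; last first.
  by rewrite mxE -expr2 sqr_ge0.
apply/matrixP => i j; rewrite (ord1 j) mxE.
move: (u0 i (mem_index_enum _)) => /implyP/(_ isT).
by rewrite mxE -expr2 sqrf_eq0 => /eqP.
Qed.

Lemma bform1_ext u w : (forall x, bform 1%:M u x = bform 1%:M w x) -> u = w.
Proof.
move=> uw; apply/eqP; rewrite -subr_eq0; apply/eqP/bform1_eq0.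
by rewrite bformBl !bformBr !uw subrr.
Qed.

End EuclideanForm.

Lemma dual_basis (R : realType) n (a b : 'cV[R]_n) : lin_indep2 a b ->
  exists p q, [/\ bform 1%:M a p = 1, bform 1%:M b p = 0,
                  bform 1%:M a q = 0 & bform 1%:M b q = 1].
Proof.
move=> ind.
have s1 : (1%:M : 'M[R]_n)^T = 1%:M by exact: trmx1.
pose g11 := bform 1%:M a a; pose g12 := bform 1%:M a b; pose g22 := bform 1%:M b b.
pose D := g11 * g22 - g12 ^+ 2.
have g22_neq0 : g22 != 0.
  apply/eqP => /bform1_eq0 b0; have := ind 0 1.
  by rewrite b0 scaler0 scale0r addr0 => /(_ erefl) [_ /eqP]; rewrite oner_eq0.
(* D is the Gram determinant of a and b, and g22 * D = |g22 a - g12 b|^2 *)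
have D_neq0 : D != 0.
  apply/eqP => D0.
  have : bform 1%:M (g22 *: a + (- g12) *: b) (g22 *: a + (- g12) *: b) = g22 * D.
    by rewrite bform_comb // -/g11 -/g12 -/g22 /D; ring.
  rewrite D0 mulr0 => /bform1_eq0 /ind [g22_0 _].
  by rewrite g22_0 eqxx in g22_neq0.
exists (D^-1 *: (g22 *: a - g12 *: b)), (D^-1 *: (g11 *: b - g12 *: a)).
rewrite !(bformZr, bformBr) -/g11 -/g22 -/g12 (bformC b a s1) -/g12.
by split; apply: (mulfI D_neq0); rewrite mulrA mulfV // /D; ring.
Qed.

Lemma row_mx_tangent (R : comNzRingType) n (A B : 'M[R]_n) z v :
  A^T = A -> B^T = B -> v^T *m row_mx (A *m z) (B *m z) = 0 ->
  bform A z v = 0 /\ bform B z v = 0.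
Proof.
move=> sA sB; rewrite mul_mx_row -row_mx0 => /eq_row_mx[Av Bv].
by rewrite (bformC _ _ sA) (bformC _ _ sB) /bform -!mulmxA Av Bv !mxE.
Qed.

Section ConePoint.
Variables (R : realType) (n : nat) (A B C : 'M[R]_n).
Hypotheses (symA : A^T = A) (symB : B^T = B) (symC : C^T = C).
Hypothesis QC_cone : forall y, Q A y = 0 -> Q B y = 0 -> Q C y = 0.
Variables z p q : 'cV[R]_n.
Hypotheses (zA : Q A z = 0) (zB : Q B z = 0).
Hypotheses (pA : bform A z p = 1) (pB : bform B z p = 0).
Hypotheses (qA : bform A z q = 0) (qB : bform B z q = 1).
Let G := C - bform C z p *: A - bform C z q *: B.

Lemma cone_point_tangent : maxrank_ge A B 9 ->
  forall v, bform A z v = 0 -> bform B z v = 0 -> bform C z v = 0 /\ bform G v v = 0.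
Proof.
move=> [r1 [r2 rk]].
have [[v1 [v1A v1B v1A_neq0]]|noA] :=
  pselect (exists v1, [/\ bform A z v1 = 0, bform B z v1 = 0 & bform A v1 v1 != 0]).
  exact: (cone_tangent_all symA symB symC QC_cone zA zB pA pB qA qB v1A v1B).
have [[v1 [v1A v1B v1B_neq0]]|noB] :=
  pselect (exists v1, [/\ bform A z v1 = 0, bform B z v1 = 0 & bform B v1 v1 != 0]).
  have QC_cone' y : bform B y y = 0 -> bform A y y = 0 -> bform C y y = 0.
    by move=> yB yA; apply: QC_cone.
  move=> v vA vB; have [] :=
    cone_tangent_all symB symA symC QC_cone' zB zA qB qA pB pA v1B v1A v1B_neq0 vB vA.
  by rewrite /G addrAC.
exfalso; pose L := row_mx (A *m z) (B *m z).
have rank_le4 M : M^T = M ->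
    (forall v, bform A z v = 0 -> bform B z v = 0 -> bform M v v = 0) ->
    (\rank M <= 4)%N.
  move=> sM vanish; apply: (@mxrank_form_vanish _ _ _ _ L sM) => v /row_mx_tangent.
  by case/(_ symA symB); apply: vanish.
have rkA : (\rank A <= 4)%N.
  apply: rank_le4 => // v vA vB; apply: contra_notP noA => vA_neq0.
  by exists v; split => //; apply/eqP.
have rkB : (\rank B <= 4)%N.
  apply: rank_le4 => // v vA vB; apply: contra_notP noB => vB_neq0.
  by exists v; split => //; apply/eqP.
(* The sum inside \rank in maxrank_ge is the row-space sum (%MS scope). *)
have rk_sum := leq_add (leq_trans (mxrank_scale r1 A) rkA)
                       (leq_trans (mxrank_scale r2 B) rkB).
by have := leq_trans (leq_trans rk (mxrank_adds_leqif _ _).1) rk_sum.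
Qed.
End ConePoint.

Lemma cone_point_pencil (R : realType) n (A B C : 'M[R]_n) z :
  A^T = A -> B^T = B -> C^T = C ->
  (forall y, Q A y = 0 -> Q B y = 0 -> Q C y = 0) ->
  maxrank_ge A B 9 -> Nset A B z ->
  exists a b : R, C *m z = a *: (A *m z) + b *: (B *m z) /\
    (\rank (C - a *: A - b *: B)%R <= 4)%N.
Proof.
move=> sA sB sC QC_cone maxrk [zA [zB ind]].
have [p [q [pA pB qA qB]]] := dual_basis ind.
rewrite -!bform_trmx // in pA pB qA qB.
have tangent := cone_point_tangent sA sB sC QC_cone zA zB pA pB qA qB maxrk.
exists (bform C z p), (bform C z q); split.
  apply: bform1_ext => x; rewrite bformDl !bformZl -!bform_trmx //.
  pose y := x - bform A z x *: p - bform B z x *: q.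
  have [] := tangent y; rewrite !(bformBr, bformZr) ?pA ?pB ?qA ?qB; try ring.
  by move=> Cy _; apply/eqP; rewrite -subr_eq0 -Cy; apply/eqP; ring.
apply: (@mxrank_form_vanish _ _ _ _ (row_mx (A *m z) (B *m z))).
  by rewrite !linearB !linearZ /= sA sB sC.
by move=> v /row_mx_tangent[] // vA vB; have [] := tangent v vA vB.
Qed.

Lemma closed_kermx (R : realType) m n (M : 'M[R]_(m, n)) :
  closed [set v : 'cV[R]_n | M *m v = 0].
Proof.
move=> v v_cl; apply/matrixP => i k; rewrite (ord1 k) [RHS]mxE.
apply: (@small_bound_eq0 _ _ (\sum_j `|M i j|) 1 ltr01) => e e_gt0 _.
have [w [Mw vw]] := v_cl _ (nbhsx_ballx v e e_gt0).
rewrite -[M *m v]subr0 -Mw -mulmxBr mxE mulr_sumr.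
apply: le_trans (ler_norm_sum _ _ _) _; apply: ler_sum => j _.
rewrite normrM mulrC ler_wpM2r //.
by move: vw => [_ /(_ j 0)]; rewrite /ball /= !mxE => /ltW.
Qed.

Lemma spans_all_mulmx_eq0 (R : realType) n m (M : 'M[R]_(m, n)) (S : set 'cV[R]_n) :
  spans_all S -> (forall z, S z -> M *m z = 0) -> M = 0.
Proof.
move=> S_span MS; apply/matrixP => i j; rewrite mxE.
have [k [c [w [Sw ej]]]] := S_span (delta_mx j 0).
have : M *m (delta_mx j 0 : 'cV_n) = 0.
  by rewrite ej mulmx_sumr big1 // => l _; rewrite -scalemxAr MS ?scaler0.
by rewrite -colE => /matrixP/(_ i 0); rewrite !mxE.
Qed.

Lemma spans_all_factor (R : realType) n (D E : 'M[R]_n) (S : set 'cV[R]_n)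
    (t : 'cV[R]_n -> R) :
  D^T = D -> E^T = E -> spans_all S ->
  (forall z, S z -> D *m z = t z *: (E *m z)) -> exists X, D = X *m E.
Proof.
move=> sD sE S_span DS; apply/submxP/row_subP => j.
have [k [c [w [Sw ej]]]] := S_span (delta_mx j 0).
have -> : row j D = (D *m delta_mx j 0)^T by rewrite -colE tr_col sD.
rewrite ej mulmx_sumr raddf_sum /=; apply: summx_sub => l _.
by rewrite -scalemxAr DS // !linearZ /= trmx_mul sE !scalemx_sub ?submxMl.
Qed.

Lemma eigen_root_char (R : fieldType) n (X : 'M[R]_n) (y : 'cV[R]_n) (s : R) :
  X *m y = s *: y -> y != 0 -> root (char_poly X^T) s.
Proof.
move=> Xy y_neq0; rewrite -eigenvalue_root_char; apply/eigenvalueP; exists y^T.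
  by rewrite -trmx_mul Xy linearZ.
by rewrite trmx_eq0.
Qed.

(* With D = X E, each ratio t z is an eigenvalue of X. *)
Lemma spans_all_ratio_roots (R : realType) n (D E : 'M[R]_n) (S : set 'cV[R]_n)
    (t : 'cV[R]_n -> R) :
  D^T = D -> E^T = E -> spans_all S ->
  (forall z, S z -> E *m z != 0 /\ D *m z = t z *: (E *m z)) ->
  exists2 P : {poly R}, P != 0 & forall z, S z -> root P (t z).
Proof.
move=> sD sE S_span DS.
have [X DXE] := spans_all_factor sD sE S_span (fun z Sz => (DS z Sz).2).
exists (char_poly X^T); first exact/monic_neq0/char_poly_monic.
move=> z Sz; have [Ez_neq0 Dz] := DS z Sz.
by apply: eigen_root_char Ez_neq0; rewrite mulmxA -DXE.
Qed.

Lemma connected_ratio_ker (R : realType) n (D E : 'M[R]_n) (K : set 'cV[R]_n)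
    (t : 'cV[R]_n -> R) (P : {poly R}) x :
  connected K -> K x -> D *m x = 0 -> P != 0 ->
  (forall z, K z -> [/\ E *m z != 0, D *m z = t z *: (E *m z) & root P (t z)]) ->
  forall z, K z -> D *m z = 0.
Proof.
move=> K_conn Kx Dx P_neq0 DK.
pose rs := [seq s <- rootsR P | s != 0].
pose F := \bigcup_(s in [set` rs]) [set y : 'cV[R]_n | (D - s *: E) *m y = 0].
pose G := [set y : 'cV[R]_n | D *m y = 0].
have F_closed : closed F.
  by rewrite /F bigcup_seq; apply: closed_bigsetU => s _; exact: closed_kermx.
(* On K, the closed sets F and G are disjoint and cover K. *)
have KG : K `&` G = K.
  apply: K_conn; first by exists x.
    exists (~` F); first by rewrite openC.
    apply/seteqP; split => y [Ky yGF]; split => //.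
      move=> [s /=]; rewrite mem_filter => /andP[s_neq0 _].
      rewrite mulmxBl -scalemxAl yGF sub0r => /eqP; rewrite oppr_eq0 scaler_eq0.
      by rewrite (negbTE s_neq0); have [/negbTE -> _ _] := DK y Ky.
    have [_ Dy rooty] := DK y Ky; rewrite /G /= Dy.
    have [-> //|ty_neq0] := eqVneq (t y) 0; first by rewrite scale0r.
    exfalso; apply: yGF; exists (t y).
      by rewrite /= mem_filter ty_neq0 -(roots_on_rootsR P_neq0) in_itv.
    by rewrite /= mulmxBl -scalemxAl Dy subrr.
  by exists G; first exact: closed_kermx.
by move=> z Kz; have [] : (K `&` G) z by rewrite KG.
Qed.

Lemma collinear_multiple (R : fieldType) (d1 d2 e1 e2 : R) :
  (e1 != 0) || (e2 != 0) -> d1 * e2 = d2 * e1 ->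
  exists t, d1 = t * e1 /\ d2 = t * e2.
Proof.
case/orP => [e1_neq0|e2_neq0] de.
  by exists (d1 / e1); split; rewrite ?divfK // mulrAC de mulfK.
by exists (d2 / e2); split; rewrite ?divfK // mulrAC -de mulfK.
Qed.

Lemma mxrank_subr_le (R : fieldType) m n (M N : 'M[R]_(m, n)) :
  (\rank (M - N)%R <= \rank M + \rank N)%N.
Proof. by rewrite -(mxrank_opp N) mxrank_add. Qed.

Lemma maxrank_pencil_basis (R : realType) n (A B : 'M[R]_n) (u1 u2 w1 w2 : R) r1 r2 :
  u1 * w2 - u2 * w1 != 0 ->
  (\rank (u1 *: A + u2 *: B)%R <= r1)%N -> (\rank (w1 *: A + w2 *: B)%R <= r2)%N ->
  ~ maxrank_ge A B (r1 + r2).+1.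
Proof.
move=> det_neq0 rkU rkW [c1 [c2 rk]].
set U := (u1 *: A + u2 *: B)%R in rkU; set W := (w1 *: A + w2 *: B)%R in rkW.
have U_sub := addsmxSl U W; have W_sub := addsmxSr U W.
have A_sub : (A <= U + W)%MS.
  have -> : A = (u1 * w2 - u2 * w1)^-1 *: (w2 *: U + (- u2) *: W).
    by apply/matrixP => i j; rewrite !mxE; field.
  by rewrite scalemx_sub // addmx_sub // scalemx_sub.
have B_sub : (B <= U + W)%MS.
  have -> : B = (u1 * w2 - u2 * w1)^-1 *: ((- w1) *: U + u1 *: W).
    by apply/matrixP => i j; rewrite !mxE; field.
  by rewrite scalemx_sub // addmx_sub // scalemx_sub.
have AB_sub : (c1 *: A + c2 *: B <= U + W)%MS by rewrite addsmx_sub !scalemx_sub.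
have := leq_trans (mxrankS AB_sub) (mxrank_adds_leqif U W).1.
by move/leq_trans/(_ (leq_add rkU rkW))/(leq_trans rk); rewrite ltnn.
Qed.

Section Component.
Variables (R : realType) (n : nat) (A B C : 'M[R]_n).
Hypotheses (symA : A^T = A) (symB : B^T = B) (symC : C^T = C).
Hypothesis maxrk : maxrank_ge A B 17.
Variable K : set 'cV[R]_n.
Hypotheses (K_conn : connected K) (K_span : spans_all K).
Hypothesis K_indep : forall z, K z -> lin_indep2 (A *m z) (B *m z).
Variables (a b : 'cV[R]_n -> R) (x : 'cV[R]_n).
Hypothesis Kx : K x.
Hypothesis K_pencil : forall z, K z ->
  C *m z = a z *: (A *m z) + b z *: (B *m z) /\
  (\rank (C - a z *: A - b z *: B)%R <= 4)%N.

Let D := C - a x *: A - b x *: B.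

Lemma component_deviation z : K z ->
  D *m z = (a z - a x) *: (A *m z) + (b z - b x) *: (B *m z).
Proof.
move=> Kz; rewrite /D !mulmxBl -!scalemxAl (K_pencil Kz).1.
by apply/matrixP => i j; rewrite !mxE; ring.
Qed.

Lemma component_coeffs_collinear z1 z : K z1 -> K z ->
  (a z - a x) * (b z1 - b x) = (b z - b x) * (a z1 - a x).
Proof.
move=> Kz1 Kz; apply/eqP; rewrite -subr_eq0; apply/negPn/negP => det_neq0.
have rk_dev y : K y -> (\rank ((a y - a x) *: A + (b y - b x) *: B)%R <= 4 + 4)%N.
  move=> Ky; have -> : ((a y - a x) *: A + (b y - b x) *: B)%R =
      (C - a x *: A - b x *: B) - (C - a y *: A - b y *: B).
    by apply/matrixP => i j; rewrite !mxE; ring.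
  by rewrite (leq_trans (mxrank_subr_le _ _)) ?leq_add
    ?(K_pencil Kx).2 ?(K_pencil Ky).2.
exact: maxrank_pencil_basis det_neq0 (rk_dev _ Kz) (rk_dev _ Kz1) maxrk.
Qed.

Lemma component_ker : forall z, K z -> D *m z = 0.
Proof.
have Dx : D *m x = 0 by rewrite component_deviation // !subrr !scale0r addr0.
have [same|/existsNP[z1 /not_implyP[Kz1 moved]]] :=
  pselect (forall z, K z -> (a z, b z) = (a x, b x)).
  move=> z Kz; rewrite component_deviation //.
  by case: (same z Kz) => -> ->; rewrite !subrr !scale0r addr0.
set e1 := a z1 - a x; set e2 := b z1 - b x.
have e_neq0 : (e1 != 0) || (e2 != 0).
  apply: contra_notT moved; rewrite negb_or !negbK !subr_eq0.
  by case/andP => /eqP -> /eqP ->.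
pose E := e1 *: A + e2 *: B.
have /choice[t ht] : forall z, exists t : R, K z ->
    a z - a x = t * e1 /\ b z - b x = t * e2.
  move=> z; have [Kz|] := pselect (K z); last by exists 0.
  have [t ?] := collinear_multiple e_neq0 (component_coeffs_collinear Kz1 Kz).
  by exists t.
have DE z : K z -> D *m z = t z *: (E *m z).
  move=> Kz; rewrite component_deviation //; have [-> ->] := ht z Kz.
  by rewrite mulmxDl -!scalemxAl scalerDr !scalerA.
have Ez_neq0 z : K z -> E *m z != 0.
  move=> Kz; apply: contraTneq e_neq0 => Ez0.
  have [-> ->] : e1 = 0 /\ e2 = 0.
    by apply: (K_indep Kz); rewrite -Ez0 /E mulmxDl -!scalemxAl.
  by rewrite eqxx.
have symD : D^T = D by rewrite /D !linearB !linearZ /= symA symB symC.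
have symE : E^T = E by rewrite /E !linearD !linearZ /= symA symB.
have [P P_neq0 Proots] := spans_all_ratio_roots symD symE K_span
  (fun z Kz => conj (Ez_neq0 z Kz) (DE z Kz)).
apply: (connected_ratio_ker K_conn Kx Dx P_neq0) => z Kz.
by split; [exact: Ez_neq0 | exact: DE | exact: Proots].
Qed.

Lemma component_pencil : C = a x *: A + b x *: B.
Proof.
apply/eqP; rewrite -subr_eq0 opprD addrA; apply/eqP.
exact: spans_all_mulmx_eq0 K_span component_ker.
Qed.
End Component.

Lemma connected_pencil (R : realType) n (A B C : 'M[R]_n) (K : set 'cV[R]_n) x :
  A^T = A -> B^T = B -> C^T = C -> maxrank_ge A B 17 ->
  connected K -> spans_all K -> K x ->
  (forall z, K z -> lin_indep2 (A *m z) (B *m z)) ->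
  (forall z, K z -> exists a b : R, C *m z = a *: (A *m z) + b *: (B *m z) /\
     (\rank (C - a *: A - b *: B)%R <= 4)%N) ->
  exists a b : R, C = a *: A + b *: B.
Proof.
move=> symA symB symC maxrk K_conn K_span Kx K_indep K_pencil.
have /choice[ab ab_pencil] : forall z, exists ab : R * R, K z ->
    C *m z = ab.1 *: (A *m z) + ab.2 *: (B *m z) /\
    (\rank (C - ab.1 *: A - ab.2 *: B)%R <= 4)%N.
  move=> z; have [/K_pencil[a [b ?]]|] := pselect (K z); first by exists (a, b).
  by exists (0, 0).
exists (ab x).1, (ab x).2.
exact: (component_pencil symA symB symC maxrk K_conn K_span K_indep Kx ab_pencil).
Qed.

Theorem theorem3p12 (R : realType) (n : nat) (A B C : 'M[R]_n) :
  symmetric_mx A -> symmetric_mx B -> symmetric_mx C ->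
  lin_indep2 A B ->
  non_dissipative A B ->
  maxrank_ge A B 17 ->
  (forall z : 'cV[R]_n, Q A z = 0 -> Q B z = 0 -> Q C z = 0) ->
  (exists x : 'cV[R]_n, Nset A B x /\ spans_all (connected_component (Nset A B) x)) ->
  exists a b : R, C = a *: A + b *: B.
Proof.
move=> symA symB symC _ _ maxrk QC_cone [x [Nx K_span]].
have KN : connected_component (Nset A B) x `<=` Nset A B.
  exact: connected_component_sub.
have maxrk9 : maxrank_ge A B 9.
  by case: maxrk => r1 [r2 rk]; exists r1, r2; apply: leq_trans rk.
apply: (connected_pencil symA symB symC maxrk _ K_span).
- exact: component_connected.
- exact: connected_component_refl.
- by move=> z /KN [_ []].
- by move=> z /KN; exact: cone_point_pencil.
Qed.
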